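(* Let $(X,M,* )$ be a G-complete fuzzy metric space and let $(\hat{C}_0(X),\Theta_{\mathcal{M}},* )$ be the associated Hausdorff fuzzy metric space on the collection $\hat{C}_0(X)$ of nonempty compact subsets of $X$. Let $T:X\to\hat{C}_0(X)$ be a multi-valued (1)-Kannan contraction, i.e. there is a constant $c\in(0,1)$ such that for all $x,y\in X$ and all $t>0$, \[ \min\{\mathcal{M}(x,Tx,t),\mathcal{M}(y,Ty,t)\}>1-t \;\Longrightarrow\; \Theta_{\mathcal{M}}(Tx,Ty,ct)>1-ct. \] Then $T$ has a fixed point, i.e. there exists $z\in X$ with $z\in Tz$.
   Context: A continuous $t$-norm is a binary operation $*:[0,1]\times[0,1]\to[0,1]$ that is associative, commutative, continuous, satisfies $a*1=a$ for all $a\in[0,1]$, and is monotone: $a*b\le c*d$ whenever $a\le c$ and $b\le d$. A fuzzy metric space (in the sense of George–Veeramani) is a triple $(X,M,* )$ where $X$ is a nonempty set, $*$ is a continuous $t$-norm and $M:X\times X\times(0,\infty)\to[0,1]$ satisfies, for all $x,y,z\in X$ and $t,s>0$: (F1) $M(x,y,t)>0$; (F2) $M(x,y,t)=1$ for all $t>0$ iff $x=y$; (F3) $M(x,y,t)=M(y,x,t)$; (F4) $M(x,z,t+s)\ge M(x,y,t)*M(y,z,s)$; (F5) $M(x,y,\cdot):(0,\infty)\to[0,1]$ is continuous. A sequence $(x_n)$ in $X$ converges to $x\in X$ if $\lim_{n\to\infty}M(x_n,x,t)=1$ for all $t>0$; it is a G-Cauchy sequence if $\lim_{n\to\infty}M(x_n,x_{n+q},t)=1$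 for all $t>0$ and all $q\in\mathbb{N}$; $(X,M,* )$ is G-complete if every G-Cauchy sequence converges. Compactness in $X$ refers to the topology induced by $M$ (open balls $B(x,r,t)=\{y: M(x,y,t)>1-r\}$). For a nonempty $A\subseteq X$, $\rho\in X$ and $t>0$, $\mathcal{M}(\rho,A,t)=\mathcal{M}(A,\rho,t)=\sup\{M(\rho,\mu,t):\mu\in A\}$. For $A,B\in\hat{C}_0(X)$ and $t>0$, $\Theta_{\mathcal{M}}(A,B,t)=\min\{\inf_{\rho\in A}\mathcal{M}(\rho,B,t),\ \inf_{\mu\in B}\mathcal{M}(A,\mu,t)\}$; the triple $(\hat{C}_0(X),\Theta_{\mathcal{M}},* )$ is called the Hausdorff fuzzy metric space. *)

From Stdlib Require Import Reals List.
From Coquelicot Require Import Rcomplements Rbar Lub.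
Open Scope R_scope.

Definition unit_int (a : R) : Prop := 0 <= a <= 1.

Definition is_cont_tnorm (star : R -> R -> R) : Prop :=
  (forall a b, unit_int a -> unit_int b -> unit_int (star a b)) /\
  (forall a b c, unit_int a -> unit_int b -> unit_int c ->
     star a (star b c) = star (star a b) c) /\
  (forall a b, unit_int a -> unit_int b -> star a b = star b a) /\
  (forall a b, unit_int a -> unit_int b ->
     forall eps, eps > 0 -> exists delta, delta > 0 /\
       forall a' b', unit_int a' -> unit_int b' ->
         Rabs (a' - a) < delta -> Rabs (b' - b) < delta ->
         Rabs (star a' b' - star a b) < eps) /\
  (forall a, unit_int a -> star a 1 = a) /\
  (forall a b c d, unit_int a -> unit_int b -> unit_int c -> unit_int d ->
     a <= c -> b <= d -> star a b <= star c d).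

Definition is_fuzzy_metric {X : Type} (M : X -> X -> R -> R) (star : R -> R -> R) : Prop :=
  is_cont_tnorm star /\
  (forall x y t, t > 0 -> M x y t <= 1) /\
  (forall x y t, t > 0 -> M x y t > 0) /\
  (forall x y, (forall t, t > 0 -> M x y t = 1) <-> x = y) /\
  (forall x y t, t > 0 -> M x y t = M y x t) /\
  (forall x y z t s, t > 0 -> s > 0 -> M x z (t + s) >= star (M x y t) (M y z s)) /\
  (forall x y t, t > 0 -> continuity_pt (M x y) t).

Definition fm_converges {X : Type} (M : X -> X -> R -> R) (u : nat -> X) (x : X) : Prop :=
  forall t, t > 0 -> Un_cv (fun n => M (u n) x t) 1.

Definition G_Cauchy {X : Type} (M : X -> X -> R -> R) (u : nat -> X) : Prop :=
  forall t, t > 0 -> forall q : nat, (q >= 1)%nat -> Un_cv (fun n => M (u n) (u (n + q)%nat) t) 1.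

Definition G_complete {X : Type} (M : X -> X -> R -> R) : Prop :=
  forall u : nat -> X, G_Cauchy M u -> exists x, fm_converges M u x.

Definition fm_ball {X : Type} (M : X -> X -> R -> R) (x : X) (r t : R) : X -> Prop :=
  fun y => M x y t > 1 - r.

Definition fm_open {X : Type} (M : X -> X -> R -> R) (U : X -> Prop) : Prop :=
  forall x, U x -> exists r t, 0 < r < 1 /\ t > 0 /\ forall y, fm_ball M x r t y -> U y.

Definition fm_compact {X : Type} (M : X -> X -> R -> R) (A : X -> Prop) : Prop :=
  forall (I : Type) (U : I -> X -> Prop),
    (forall i, fm_open M (U i)) ->
    (forall a, A a -> exists i, U i a) ->
    exists l : list I, forall a, A a -> exists i, In i l /\ U i a.

Definition in_C0 {X : Type} (M : X -> X -> R -> R) (A : X -> Prop) : Prop :=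
  (exists a, A a) /\ fm_compact M A.

Definition Msup {X : Type} (M : X -> X -> R -> R) (rho : X) (A : X -> Prop) (t : R) : R :=
  real (Lub_Rbar (fun r => exists mu, A mu /\ r = M rho mu t)).

Definition Theta {X : Type} (M : X -> X -> R -> R) (A B : X -> Prop) (t : R) : R :=
  Rmin (real (Glb_Rbar (fun r => exists rho, A rho /\ r = Msup M rho B t)))
       (real (Glb_Rbar (fun r => exists mu, B mu /\ r = Msup M mu A t))).

Definition kannan1 {X : Type} (M : X -> X -> R -> R) (T : X -> X -> Prop) : Prop :=
  exists c, 0 < c < 1 /\
    forall x y t, t > 0 ->
      Rmin (Msup M x (T x) t) (Msup M y (T y) t) > 1 - t ->
      Theta M (T x) (T y) (c * t) > 1 - c * t.

From Stdlib Require Import Reals Lra Lia Classical ClassicalEpsilon List.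
From Coquelicot Require Import Rbar Lub.
Open Scope R_scope.

(* Say that x is t-close to its image when M(x,y,t) > 1 - t for some y in Tx.  Taking y in Tx, and
   descending from the trivial case s >= 1, t-closeness of x makes y s-close for
   all s >= t, hence (ct)-close.  This yields an orbit x_(n+1) in Tx_n with
   M(x_n, x_(n+1), c^n) > 1 - c^n, which is G-Cauchy by the triangle inequality
   and the continuity of the t-norm at (1,1).  Applying the condition to x_n and
   the limit z turns u-closeness of z into (cu + eps)-closeness, so z is
   s-close to Tz for every s > 0; a compact set is closed, hence z is in Tz. *)

Lemma unit_int_1 : unit_int 1.
Proof. split; lra. Qed.

Lemma pow_eventually_lt c e : 0 < c < 1 -> 0 < e ->
  exists N, forall n, (N <= n)%nat -> c ^ n < e.
Proof.
  intros Hc He.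
  destruct (pow_lt_1_zero c ltac:(rewrite Rabs_pos_eq; lra) e He) as (N & HN).
  exists N; intros n Hn.
  specialize (HN n Hn). rewrite Rabs_pos_eq in HN; [exact HN|].
  apply pow_le; lra.
Qed.

Lemma Un_cv_1_squeeze (u v : nat -> R) :
  (forall n, u n <= v n <= 1) -> Un_cv u 1 -> Un_cv v 1.
Proof.
  intros Huv Hu eps Heps.
  destruct (Hu eps Heps) as (N & HN).
  exists N; intros n Hn.
  specialize (HN n Hn); specialize (Huv n).
  unfold R_dist in *. apply Rabs_def2 in HN. apply Rabs_def1; lra.
Qed.

Lemma continuity_pt_right_lt (f : R -> R) t a :
  continuity_pt f t -> f t < a -> exists s, 0 < s /\ f (t + s) < a.
Proof.
  intros Hf Hlt.
  unfold continuity_pt, continue_in, limit1_in, limit_in in Hf; simpl in Hf.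
  destruct (Hf (a - f t) ltac:(lra)) as (d & Hd & Hclose).
  exists (d / 2); split; [lra|].
  assert (Hdist : R_dist (f (t + d / 2)) (f t) < a - f t).
  { apply Hclose. split.
    - split; [exact I | lra].
    - unfold R_dist. replace (t + d / 2 - t) with (d / 2) by ring.
      rewrite Rabs_pos_eq; lra. }
  unfold R_dist in Hdist. apply Rabs_def2 in Hdist. lra.
Qed.

Lemma list_pos_lower_bound (l : list R) :
  (forall r, In r l -> 0 < r) -> exists s, 0 < s /\ forall r, In r l -> s <= r.
Proof.
  induction l as [|r0 l IH]; intros Hpos.
  - exists 1; split; [lra | intros r []].
  - destruct IH as (s & Hs & Hlow); [intros r Hr; apply Hpos; now right|].
    assert (Hr0 : 0 < r0) by (apply Hpos; now left).
    exists (Rmin s r0); split; [now apply Rmin_glb_lt|].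
    intros r [<- | Hr].
    + apply Rmin_r.
    + eapply Rle_trans; [apply Rmin_l | now apply Hlow].
Qed.

Lemma Lub_Rbar_real_ub (E : R -> Prop) b e :
  (forall r, E r -> r <= b) -> E e -> e <= real (Lub_Rbar E).
Proof.
  intros Hb He.
  destruct (Lub_Rbar_correct E) as [Hub Hleast].
  assert (Hle_b : Rbar_le (Lub_Rbar E) b) by (apply Hleast; exact Hb).
  assert (Hge_e : Rbar_le e (Lub_Rbar E)) by (apply Hub; exact He).
  destruct (Lub_Rbar E); simpl in *; easy.
Qed.

Lemma Lub_Rbar_real_approx (E : R -> Prop) b e r :
  (forall x, E x -> x <= b) -> E e -> r < real (Lub_Rbar E) -> exists x, E x /\ r < x.
Proof.
  intros Hb He Hr. apply NNPP; intro Hno.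
  destruct (Lub_Rbar_correct E) as [Hub Hleast].
  assert (Hle_r : Rbar_le (Lub_Rbar E) r).
  { apply Hleast; intros x Hx. apply Rnot_lt_le; intro Hlt. apply Hno; now exists x. }
  assert (Hge_e : Rbar_le e (Lub_Rbar E)) by (apply Hub; exact He).
  destruct (Lub_Rbar E); simpl in *; [lra | easy | easy].
Qed.

Lemma Glb_Rbar_real_lb (E : R -> Prop) b e :
  (forall r, E r -> b <= r) -> E e -> real (Glb_Rbar E) <= e.
Proof.
  intros Hb He.
  destruct (Glb_Rbar_correct E) as [Hlb Hgreatest].
  assert (Hge_b : Rbar_le b (Glb_Rbar E)) by (apply Hgreatest; exact Hb).
  assert (Hle_e : Rbar_le (Glb_Rbar E) e) by (apply Hlb; exact He).
  destruct (Glb_Rbar E); simpl in *; easy.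
Qed.

Lemma nat_dependent_choice {A : Type} (P : nat -> A -> Prop)
  (Rel : nat -> A -> A -> Prop) (a0 : A) :
  P 0%nat a0 -> (forall n a, P n a -> exists b, Rel n a b /\ P (S n) b) ->
  exists u : nat -> A, forall n, P n (u n) /\ Rel n (u n) (u (S n)).
Proof.
  intros H0 Hstep.
  set (next n a := epsilon (inhabits a0) (fun b => Rel n a b /\ P (S n) b)).
  set (u := fix u n := match n with O => a0 | S k => next k (u k) end).
  assert (HP : forall n, P n (u n)).
  { induction n as [|n IH]; [exact H0|].
    exact (proj2 (epsilon_spec _ _ (Hstep n (u n) IH))). }
  exists u; intro n; split; [apply HP|].
  exact (proj1 (epsilon_spec _ _ (Hstep n (u n) (HP n)))).
Qed.

Section TNorm.

Variable star : R -> R -> R.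
Hypothesis Hstar : is_cont_tnorm star.

Lemma tnorm_unit_int a b : unit_int a -> unit_int b -> unit_int (star a b).
Proof. destruct Hstar as (Hunit & _). apply Hunit. Qed.

Lemma tnorm_1_r a : unit_int a -> star a 1 = a.
Proof. destruct Hstar as (_ & _ & _ & _ & H1 & _). apply H1. Qed.

Lemma tnorm_1_l a : unit_int a -> star 1 a = a.
Proof.
  intros Ha. destruct Hstar as (_ & _ & Hcomm & _).
  rewrite Hcomm by (exact unit_int_1 || exact Ha). now apply tnorm_1_r.
Qed.

(* Continuity at (a,b) plus monotonicity, which is why one-sided bounds suffice. *)
Lemma tnorm_gt_near a b eps : unit_int a -> unit_int b -> 0 < eps ->
  exists d, 0 < d /\ forall a' b', unit_int a' -> unit_int b' ->
    a - d < a' -> b - d < b' -> star a b - eps < star a' b'.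
Proof.
  intros Ha Hb Heps.
  destruct Hstar as (_ & _ & _ & Hcont & _ & Hmono).
  destruct (Hcont a b Ha Hb eps Heps) as (d & Hd & Hclose).
  exists d; split; [exact Hd|].
  intros a' b' Ha' Hb' Hda Hdb.
  assert (Hmin : forall u v, unit_int u -> unit_int v -> u - d < v ->
            unit_int (Rmin u v) /\ Rabs (Rmin u v - u) < d /\ Rmin u v <= v).
  { intros u v Hu Hv Huv. unfold unit_int in *.
    unfold Rmin; destruct (Rle_dec u v); repeat split; try apply Rabs_def1; lra. }
  destruct (Hmin a a' Ha Ha' Hda) as (Ua & Da & La).
  destruct (Hmin b b' Hb Hb' Hdb) as (Ub & Db & Lb).
  specialize (Hclose _ _ Ua Ub Da Db). apply Rabs_def2 in Hclose.
  pose proof (Hmono _ _ _ _ Ua Ub Ha' Hb' La Lb). lra.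
Qed.

Lemma tnorm_Un_cv_1 (u v : nat -> R) :
  (forall n, unit_int (u n)) -> (forall n, unit_int (v n)) ->
  Un_cv u 1 -> Un_cv v 1 -> Un_cv (fun n => star (u n) (v n)) 1.
Proof.
  intros Hu Hv Hu1 Hv1 eps Heps.
  destruct (tnorm_gt_near 1 1 eps unit_int_1 unit_int_1 Heps) as (d & Hd & Hnear).
  rewrite tnorm_1_r in Hnear by exact unit_int_1.
  destruct (Hu1 d Hd) as (N1 & HN1); destruct (Hv1 d Hd) as (N2 & HN2).
  exists (N1 + N2)%nat; intros n Hn.
  specialize (HN1 n ltac:(lia)); specialize (HN2 n ltac:(lia)).
  unfold R_dist in *. apply Rabs_def2 in HN1, HN2.
  pose proof (Hnear _ _ (Hu n) (Hv n) ltac:(lra) ltac:(lra)).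
  pose proof (tnorm_unit_int _ _ (Hu n) (Hv n)) as [_ Hle1].
  apply Rabs_def1; lra.
Qed.

End TNorm.

Section FuzzyMetric.

Variables (X : Type) (M : X -> X -> R -> R) (star : R -> R -> R).
Hypothesis HM : is_fuzzy_metric M star.

Lemma fm_tnorm : is_cont_tnorm star.
Proof. apply HM. Qed.

Lemma M_pos x y t : 0 < t -> 0 < M x y t.
Proof. destruct HM as (_ & _ & Hpos & _). apply Hpos. Qed.

Lemma M_unit_int x y t : 0 < t -> unit_int (M x y t).
Proof.
  intros Ht. destruct HM as (_ & Hle1 & _).
  split; [now apply Rlt_le, M_pos | now apply Hle1].
Qed.

Lemma M_refl x t : 0 < t -> M x x t = 1.
Proof. destruct HM as (_ & _ & _ & Heq & _). intros Ht. now apply Heq. Qed.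

Lemma M_eq1 x y : (forall t, 0 < t -> M x y t = 1) -> x = y.
Proof. destruct HM as (_ & _ & _ & Heq & _). apply Heq. Qed.

Lemma M_sym x y t : 0 < t -> M x y t = M y x t.
Proof. destruct HM as (_ & _ & _ & _ & Hsym & _). apply Hsym. Qed.

Lemma M_triangle x y z t s : 0 < t -> 0 < s ->
  star (M x y t) (M y z s) <= M x z (t + s).
Proof.
  destruct HM as (_ & _ & _ & _ & _ & Htri & _).
  intros Ht Hs. now apply Rge_le, Htri.
Qed.

Lemma M_continuous x y t : 0 < t -> continuity_pt (M x y) t.
Proof. destruct HM as (_ & _ & _ & _ & _ & _ & Hcont). apply Hcont. Qed.

Lemma M_nondecreasing x y t s : 0 < t -> t <= s -> M x y t <= M x y s.
Proof.
  intros Ht Hts. destruct (Req_dec t s) as [<- | Hne]; [lra|].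
  pose proof (M_triangle x x y (s - t) t ltac:(lra) Ht) as Htri.
  rewrite M_refl, (tnorm_1_l _ fm_tnorm) in Htri by (lra || now apply M_unit_int).
  now replace s with (s - t + t) by ring.
Qed.

Lemma le_Msup rho (A : X -> Prop) a t : 0 < t -> A a -> M rho a t <= Msup M rho A t.
Proof.
  intros Ht Ha. unfold Msup. apply (Lub_Rbar_real_ub _ 1).
  - intros r (mu & _ & ->). now apply M_unit_int.
  - now exists a.
Qed.

Lemma Msup_gt_witness rho (A : X -> Prop) t r : 0 < t -> (exists a, A a) ->
  r < Msup M rho A t -> exists a, A a /\ r < M rho a t.
Proof.
  intros Ht [a Ha] Hr. unfold Msup in Hr.
  apply (Lub_Rbar_real_approx _ 1 (M rho a t)) in Hr.
  - destruct Hr as (x & (b & Hb & ->) & Hlt). now exists b.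
  - intros x (b & _ & ->). now apply M_unit_int.
  - now exists a.
Qed.

Lemma Theta_le_Msup (A B : X -> Prop) rho t : 0 < t -> A rho -> (exists b, B b) ->
  Theta M A B t <= Msup M rho B t.
Proof.
  intros Ht Hrho [b Hb]. unfold Theta.
  eapply Rle_trans; [apply Rmin_l|].
  apply (Glb_Rbar_real_lb _ 0).
  - intros r (mu & _ & ->).
    eapply Rle_trans; [|apply (le_Msup mu B b t Ht Hb)]. now apply M_unit_int.
  - now exists rho.
Qed.

Lemma M_Un_cv_consecutive (x : nat -> X) c : 0 < c < 1 ->
  (forall n, 1 - c ^ n < M (x n) (x (S n)) (c ^ n)) ->
  forall t, 0 < t -> Un_cv (fun n => M (x n) (x (S n)) t) 1.
Proof.
  intros Hc Hx t Ht eps Heps.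
  destruct (pow_eventually_lt c (Rmin t eps) Hc ltac:(now apply Rmin_glb_lt))
    as (N & HN).
  exists N; intros n Hn.
  specialize (HN n Hn). pose proof (Rmin_l t eps). pose proof (Rmin_r t eps).
  assert (Hcn : 0 < c ^ n) by (apply pow_lt; lra).
  pose proof (M_nondecreasing (x n) (x (S n)) (c ^ n) t Hcn ltac:(lra)).
  pose proof (M_unit_int (x n) (x (S n)) t Ht) as [_ Hle1].
  specialize (Hx n). unfold R_dist. apply Rabs_def1; lra.
Qed.

Lemma G_Cauchy_of_geometric (x : nat -> X) c : 0 < c < 1 ->
  (forall n, 1 - c ^ n < M (x n) (x (S n)) (c ^ n)) -> G_Cauchy M x.
Proof.
  intros Hc Hx.
  assert (Hq : forall q t, 0 < t -> Un_cv (fun n => M (x n) (x (n + q)%nat) t) 1).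
  { induction q as [|q IH]; intros t Ht.
    - intros eps Heps; exists O; intros n _.
      rewrite Nat.add_0_r, M_refl by exact Ht.
      unfold R_dist; rewrite Rminus_diag, Rabs_R0; lra.
    - apply (Un_cv_1_squeeze
        (fun n => star (M (x n) (x (n + q)%nat) (t / 2))
                       (M (x (n + q)%nat) (x (S (n + q))) (t / 2)))).
      + intro n. rewrite Nat.add_succ_r. split; [|now apply M_unit_int].
        replace t with (t / 2 + t / 2) at 3 by field.
        apply M_triangle; lra.
      + apply (tnorm_Un_cv_1 _ fm_tnorm).
        * intro n; apply M_unit_int; lra.
        * intro n; apply M_unit_int; lra.
        * apply IH; lra.
        * exact (CV_shift' _ q _ (M_Un_cv_consecutive x c Hc Hx (t / 2) ltac:(lra))). }
  intros t Ht q _. now apply Hq.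
Qed.

Lemma fm_open_sublevel z t a : 0 < t -> a <= 1 -> fm_open M (fun y => M z y t < a).
Proof.
  intros Ht Ha1 y Hy.
  destruct (continuity_pt_right_lt (M z y) t a (M_continuous z y t Ht) Hy)
    as (s & Hs & Hys).
  assert (Ua : unit_int a) by (pose proof (M_pos z y t Ht); split; lra).
  destruct (tnorm_gt_near _ fm_tnorm a 1 (a - M z y (t + s)) Ua unit_int_1 ltac:(lra))
    as (d & Hd & Hnear).
  rewrite (tnorm_1_r _ fm_tnorm a Ua) in Hnear.
  pose proof (Rmin_l (d / 2) (1 / 2)). pose proof (Rmin_r (d / 2) (1 / 2)).
  assert (Hr : 0 < Rmin (d / 2) (1 / 2)) by (apply Rmin_glb_lt; lra).
  exists (Rmin (d / 2) (1 / 2)), s.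
  split; [lra|]; split; [exact Hs|].
  intros v Hv; unfold fm_ball in Hv.
  apply Rnot_le_lt; intro Hge.
  pose proof (M_triangle z v y t s Ht Hs).
  rewrite (M_sym y v s Hs) in Hv.
  pose proof (Hnear (M z v t) (M v y s) (M_unit_int z v t Ht) (M_unit_int v y s Hs)
                ltac:(lra) ltac:(lra)).
  lra.
Qed.

Lemma fm_compact_adherent (A : X -> Prop) z : fm_compact M A ->
  (forall s, 0 < s -> exists w, A w /\ 1 - s < M z w s) -> A z.
Proof.
  intros Hcomp Hadh. apply NNPP; intro Hz.
  destruct (Hcomp {p : R * R | 0 < fst p /\ snd p < 1}
              (fun i y => M z y (fst (proj1_sig i)) < snd (proj1_sig i)))
    as (l & Hl).
  - intros [[t a] [Ht Ha]]; simpl in *. apply fm_open_sublevel; lra.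
  - intros a Ha.
    assert (Hsep : exists t, 0 < t /\ M z a t < 1).
    { apply NNPP; intro Hno. apply Hz. replace z with a; [exact Ha|].
      symmetry; apply M_eq1; intros t Ht.
      destruct (M_unit_int z a t Ht) as [_ Hle1]. destruct Hle1 as [Hlt | ->]; [|easy].
      exfalso; apply Hno; now exists t. }
    destruct Hsep as (t & Ht & Hlt).
    assert (Hi : 0 < fst (t, (M z a t + 1) / 2) /\ snd (t, (M z a t + 1) / 2) < 1)
      by (simpl; split; lra).
    exists (exist (fun p : R * R => 0 < fst p /\ snd p < 1) _ Hi); simpl; lra.
  - destruct (list_pos_lower_bound
                (map (fun i => Rmin (fst (proj1_sig i)) (1 - snd (proj1_sig i))) l))
      as (s & Hs & Hlow).
    { intros r Hr. apply in_map_iff in Hr.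
      destruct Hr as ([[t a] [Ht Ha]] & <- & _); simpl in *. apply Rmin_glb_lt; lra. }
    destruct (Hadh s Hs) as (w & Hw & Hzw).
    destruct (Hl w Hw) as ([[t a] [Ht Ha]] & Hin & Hwa); simpl in *.
    pose proof (Hlow _ (in_map _ _ _ Hin)) as Hst; simpl in Hst.
    pose proof (Rmin_l t (1 - a)). pose proof (Rmin_r t (1 - a)).
    pose proof (M_nondecreasing z w s t Hs ltac:(lra)). lra.
Qed.

End FuzzyMetric.

Section Kannan.

Variables (X : Type) (M : X -> X -> R -> R) (star : R -> R -> R) (T : X -> X -> Prop).
Variable c : R.
Hypothesis HM : is_fuzzy_metric M star.
Hypothesis Hne : forall x, exists y, T x y.
Hypothesis Hc : 0 < c < 1.
Hypothesis Hkannan : forall x y t, t > 0 ->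
  Rmin (Msup M x (T x) t) (Msup M y (T y) t) > 1 - t ->
  Theta M (T x) (T y) (c * t) > 1 - c * t.

Definition close_to_image (x : X) (t : R) : Prop := exists y, T x y /\ 1 - t < M x y t.

Lemma close_to_image_mono x t s : 0 < t -> t <= s ->
  close_to_image x t -> close_to_image x s.
Proof.
  intros Ht Hts (y & Hy & Hm). exists y; split; [exact Hy|].
  pose proof (M_nondecreasing _ M star HM x y t s Ht Hts). lra.
Qed.

Lemma close_to_image_of_ge_1 x t : 1 <= t -> close_to_image x t.
Proof.
  intros Ht. destruct (Hne x) as [y Hy]. exists y; split; [exact Hy|].
  pose proof (M_pos _ M star HM x y t ltac:(lra)). lra.
Qed.

Lemma Msup_image_gt x t : 0 < t -> close_to_image x t -> 1 - t < Msup M x (T x) t.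
Proof.
  intros Ht (y & Hy & Hm).
  pose proof (le_Msup _ M star HM x (T x) y t Ht Hy). lra.
Qed.

Lemma kannan_step x y y' s : 0 < s ->
  close_to_image x s -> close_to_image y s -> T x y' ->
  exists w, T y w /\ 1 - c * s < M y' w (c * s).
Proof.
  intros Hs Hx Hy Hy'.
  assert (Hcs : 0 < c * s) by nra.
  pose proof (Hkannan x y s Hs
    (Rmin_glb_lt _ _ _ (Msup_image_gt x s Hs Hx) (Msup_image_gt y s Hs Hy))) as HTheta.
  pose proof (Theta_le_Msup _ M star HM (T x) (T y) y' (c * s) Hcs Hy' (Hne y)).
  apply (Msup_gt_witness _ M star HM); [exact Hcs | exact (Hne y) | lra].
Qed.

Lemma close_to_image_image_ge x y t : 0 < t -> T x y -> close_to_image x t ->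
  forall s, t <= s -> close_to_image y s.
Proof.
  intros Ht Hxy Hx.
  assert (Hdesc : forall k s, t <= s -> c ^ k <= s -> close_to_image y s).
  { induction k as [|k IH]; intros s Hts Hks; [now apply close_to_image_of_ge_1|].
    assert (Hsc : c * (s / c) = s) by (field; lra).
    assert (Hsc0 : 0 < s / c) by (apply Rdiv_lt_0_compat; lra).
    assert (Hs_sc : s <= s / c)
      by (apply (Rmult_le_reg_l c); [lra | rewrite Hsc; nra]).
    assert (Hk_sc : c ^ k <= s / c)
      by (apply (Rmult_le_reg_l c); [lra | rewrite Hsc; exact Hks]).
    destruct (kannan_step x y y (s / c) Hsc0
                (close_to_image_mono x t (s / c) Ht ltac:(lra) Hx)
                (IH (s / c) ltac:(lra) Hk_sc) Hxy) as (w & Hw & Hmw).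
    rewrite Hsc in Hmw. now exists w. }
  intros s Hts.
  destruct (pow_eventually_lt c t Hc Ht) as (N & HN).
  apply (Hdesc N s Hts). pose proof (HN N (le_n N)). lra.
Qed.

Lemma close_to_image_image x y t : 0 < t -> T x y -> close_to_image x t ->
  close_to_image y (c * t).
Proof.
  intros Ht Hxy Hx.
  exact (kannan_step x y y t Ht Hx
           (close_to_image_image_ge x y t Ht Hxy Hx t (Rle_refl t)) Hxy).
Qed.

Lemma kannan_orbit (x0 : X) : exists x : nat -> X, forall n,
  close_to_image (x n) (c ^ n) /\
  T (x n) (x (S n)) /\ 1 - c ^ n < M (x n) (x (S n)) (c ^ n).
Proof.
  apply (nat_dependent_choice (fun n a => close_to_image a (c ^ n))
           (fun n a b => T a b /\ 1 - c ^ n < M a b (c ^ n)) x0).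
  - apply close_to_image_of_ge_1; simpl; lra.
  - intros n a (b & Hab & Hm). exists b; split; [now split|].
    apply (close_to_image_image a b); [apply pow_lt; lra | exact Hab | now exists b].
Qed.

Lemma close_to_image_limit_step (x : nat -> X) z u eps :
  (forall n, close_to_image (x n) (c ^ n) /\ T (x n) (x (S n))) ->
  fm_converges M x z -> 0 < u -> 0 < eps ->
  close_to_image z u -> close_to_image z (c * u + eps).
Proof.
  intros Hx Hz Hu Heps Hzu.
  destruct (Rle_lt_dec 1 (c * u + eps)) as [Hbig | Hsmall];
    [now apply close_to_image_of_ge_1|].
  assert (Hcu : 0 < c * u) by nra.
  assert (Hb : unit_int (1 - c * u)) by (split; lra).
  destruct (tnorm_gt_near _ (fm_tnorm _ M star HM) 1 (1 - c * u) eps unit_int_1 Hb Heps)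
    as (d & Hd & Hnear).
  rewrite (tnorm_1_l _ (fm_tnorm _ M star HM) _ Hb) in Hnear.
  destruct (Hz eps Heps d Hd) as (N1 & HN1).
  destruct (pow_eventually_lt c u Hc Hu) as (N2 & HN2).
  set (n := (N1 + N2)%nat).
  destruct (Hx n) as (Hxn & HTn).
  assert (Hxn_u : close_to_image (x n) u).
  { apply (close_to_image_mono _ (c ^ n)); [apply pow_lt; lra | | exact Hxn].
    left; apply HN2; unfold n; lia. }
  destruct (kannan_step (x n) z (x (S n)) u Hu Hxn_u Hzu HTn) as (w & Hw & Hmw).
  exists w; split; [exact Hw|].
  assert (Hclose : 1 - d < M z (x (S n)) eps).
  { specialize (HN1 (S n) ltac:(unfold n; lia)). unfold R_dist in HN1.
    apply Rabs_def2 in HN1. rewrite (M_sym _ M star HM _ _ _ Heps). lra. }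
  pose proof (M_triangle _ M star HM z (x (S n)) w eps (c * u) Heps Hcu).
  pose proof (Hnear _ _ (M_unit_int _ M star HM z (x (S n)) eps Heps)
                (M_unit_int _ M star HM (x (S n)) w (c * u) Hcu) ltac:(lra) ltac:(lra)).
  replace (c * u + eps) with (eps + c * u) by ring. lra.
Qed.

Lemma close_to_image_limit (x : nat -> X) z :
  (forall n, close_to_image (x n) (c ^ n) /\ T (x n) (x (S n))) ->
  fm_converges M x z -> forall s, 0 < s -> close_to_image z s.
Proof.
  intros Hx Hz s Hs.
  assert (Hiter : forall k, close_to_image z (c ^ k + s / 2)).
  { induction k as [|k IH]; [apply close_to_image_of_ge_1; simpl; lra|].
    assert (Hck : 0 < c ^ k) by (apply pow_lt; lra).
    replace (c ^ S k + s / 2) with (c * (c ^ k + s / 2) + (1 - c) * s / 2)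
      by (simpl; field).
    apply (close_to_image_limit_step x); auto; nra. }
  destruct (pow_eventually_lt c (s / 2) Hc ltac:(lra)) as (N & HN).
  pose proof (HN N (le_n N)). pose proof (pow_lt c N ltac:(lra)).
  apply (close_to_image_mono z (c ^ N + s / 2)); auto; lra.
Qed.

End Kannan.

Theorem mainTheorem1 (X : Type) (M : X -> X -> R -> R) (star : R -> R -> R)
  (T : X -> X -> Prop) :
  inhabited X ->
  is_fuzzy_metric M star ->
  G_complete M ->
  (forall x, in_C0 M (T x)) ->
  kannan1 M T ->
  exists z, T z z.
Proof.
  intros [x0] HM HG HC (c & Hc & Hkannan).
  assert (Hne : forall x, exists y, T x y) by (intro x; apply HC).
  destruct (kannan_orbit X M star T c HM Hne Hc Hkannan x0) as (x & Hx).
  destruct (HG x) as (z & Hz).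
  { apply (G_Cauchy_of_geometric X M star HM x c Hc). intro n; apply Hx. }
  exists z. apply (fm_compact_adherent X M star HM (T z) z (proj2 (HC z))).
  apply (close_to_image_limit X M star T c HM Hne Hc Hkannan x z); [|exact Hz].
  intro n; split; apply Hx.
Qed.
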